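(* Let $A$ be a torsion-free Abelian group with endomorphism ring $E=\mathrm{End}\,A$. Then $E$ is centrally essential if and only if the quasi-endomorphism ring $\mathbb{Q}E=\mathbb{Q}\otimes E$ is centrally essential.
   Context: All rings are associative with non-zero identity. A ring $R$ is centrally essential if for every non-zero $a\in R$ there exist non-zero elements $x,y$ of the center of $R$ with $ax=y$. The quasi-endomorphism ring $\mathbb{Q}E=\mathbb{Q}\otimes\mathrm{End}\,A$ is identified with $\{\alpha\in\mathrm{End}_{\mathbb{Q}}(\mathbb{Q}\otimes A)\mid n\alpha\in\mathrm{End}\,A\text{ for some positive integer } n\}$. *)

From HB Require Import structures.
From mathcomp Require Import all_boot all_order all_algebra.
Set Implicit Arguments. Unset Strict Implicit. Unset Printing Implicit Defensive.
Import GRing.Theory.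
Local Open Scope ring_scope.

(** A ring whose elements are maps [U -> U] (in a set [S] closed under the ring
    operations), with product = composition [(f g)(u) = f (g u)], zero = zero map,
    and equality of elements = pointwise equality. *)

Definition fun_nonzero (U : zmodType) (f : U -> U) : Prop := exists u, f u != 0.

Definition fun_central (U : zmodType) (S : (U -> U) -> Prop) (x : U -> U) : Prop :=
  S x /\ forall g, S g -> x \o g =1 g \o x.

Definition centrally_essential_fun (U : zmodType) (S : (U -> U) -> Prop) : Prop :=
  forall a, S a -> fun_nonzero a ->
    exists x y, [/\ fun_central S x, fun_central S y, fun_nonzero x, fun_nonzero y
                  & a \o x =1 y].

Definition torsion_free (A : zmodType) : Prop :=
  forall (a : A) (n : nat), a *+ n.+1 = 0 -> a = 0.

Definition is_endo (A : zmodType) (f : A -> A) : Prop :=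
  forall a b, f (a - b) = f a - f b.

(** [V] together with [iota] is (a model of) [Q ⊗ A]: a Q-vector space containing
    [A] (via the injective additive map [iota]) such that every [v] has a positive
    integer multiple in [A]. *)
Definition is_rational_hull (A : zmodType) (V : lmodType rat) (iota : A -> V) : Prop :=
  [/\ forall a b, iota (a - b) = iota a - iota b,
      injective iota
    & forall v : V, exists n : nat, exists a : A, (0 < n)%N /\ v *+ n = iota a].

(** Quasi-endomorphism ring [QE], identified with the Q-linear maps [alpha] of
    [Q ⊗ A] such that [n alpha ∈ End A] for some positive integer [n]. *)
Definition is_quasi_endo (A : zmodType) (V : lmodType rat) (iota : A -> V)
    (alpha : V -> V) : Prop :=
  (forall (c : rat) (u v : V), alpha (c *: u + v) = c *: alpha u + alpha v) /\
  exists n : nat, (0 < n)%N /\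
    forall a : A, exists b : A, (alpha (iota a)) *+ n = iota b.

From HB Require Import structures.
From mathcomp Require Import all_boot all_order all_algebra.
Set Implicit Arguments. Unset Strict Implicit. Unset Printing Implicit Defensive.
Import GRing.Theory Num.Theory.
Local Open Scope ring_scope.

(** An endomorphism [f] of [A] extends uniquely to a [Q]-linear map
    [qextend f] of [V = Q ⊗ A]; this embeds [End A] into [QE] as a subring
    containing a positive integer multiple of every quasi-endomorphism.
    Centrality passes through the embedding in both directions, because
    commuting with [g] is the same as commuting with [n g], and non-vanishing is
    preserved because [V] is torsion-free.  Hence witnesses [x, y] for [n alpha]
    in [End A] give the witnesses [qextend x, n^-1 qextend y] for [alpha], and
    witnesses [X, Y] for [qextend a], multiplied by a common integer that brings
    both into [End A], give witnesses for [a]. *)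

Section ZmodMorphism.
Variables (U W : zmodType) (f : U -> W).
Hypothesis fB : zmod_morphism f.
Let fA : {additive U -> W} := HB.pack f (GRing.isZmodMorphism.Build U W f fB).

Lemma zmod_morph0 : f 0 = 0. Proof. exact: (raddf0 fA). Qed.
Lemma zmod_morphD x y : f (x + y) = f x + f y. Proof. exact: (raddfD fA). Qed.
Lemma zmod_morphMn x n : f (x *+ n) = f x *+ n. Proof. exact: (raddfMn fA). Qed.
Lemma zmod_morphMz x z : f (x *~ z) = f x *~ z. Proof. exact: (raddfMz fA). Qed.
End ZmodMorphism.

Lemma is_endo_comp (A : zmodType) (f g : A -> A) :
  is_endo f -> is_endo g -> is_endo (f \o g).
Proof. by move=> fE gE a b /=; rewrite gE fE. Qed.

Lemma natr_neq0 {F : numFieldType} n : (0 < n)%N -> n%:R != 0 :> F.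
Proof. by rewrite pnatr_eq0 -lt0n. Qed.

Section LmodNumField.
Variables (F : numFieldType) (V : lmodType F).

Lemma mulrn_lmodI n : (0 < n)%N -> injective (fun v : V => v *+ n).
Proof.
by move=> n0 u w /= e; apply: (scalerI (natr_neq0 n0)); rewrite !scaler_nat.
Qed.

Lemma fun_nonzero_scale (c : F) (f : V -> V) :
  c != 0 -> fun_nonzero f -> fun_nonzero (fun v => c *: f v).
Proof. by move=> c0 [v fv]; exists v; rewrite scaler_eq0 negb_or c0. Qed.

Lemma eq_fun_nonzero (f g : V -> V) : f =1 g -> fun_nonzero f -> fun_nonzero g.
Proof. by move=> fg [v fv]; exists v; rewrite -fg. Qed.

Lemma linear_comp (f g : V -> V) : linear f -> linear g -> linear (f \o g).
Proof. by move=> fL gL c u v /=; rewrite gL fL. Qed.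

Lemma linear_scale (c : F) (f : V -> V) :
  linear f -> linear (fun v => c *: f v).
Proof. by move=> fL a u v /=; rewrite fL scalerDr !scalerA mulrC. Qed.

End LmodNumField.

Section RationalHull.
Variables (A : zmodType) (V : lmodType rat) (iota : A -> V).
Hypotheses (iotaB : zmod_morphism iota) (iota_inj : injective iota).
Hypothesis iota_hull : forall v : V, exists n a, (0 < n)%N /\ v *+ n = iota a.

Notation quasi_endo := (is_quasi_endo iota).

Lemma linear_eq_hull (f g : V -> V) :
  linear f -> linear g -> (forall a, f (iota a) = g (iota a)) -> f =1 g.
Proof.
move=> /GRing.zmod_morphism_linear fB /GRing.zmod_morphism_linear gB fg v.
have [n [a [n0 va]]] := iota_hull v.
apply: (mulrn_lmodI n0).
by rewrite /= -(zmod_morphMn fB) -(zmod_morphMn gB) va fg.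
Qed.

Lemma hull_witness v :
  exists p : nat * A, (0 < p.1)%N && (v *+ p.1 == iota p.2).
Proof.
by have [n [a [n0 va]]] := iota_hull v; exists (n, a); rewrite /= n0 va eqxx.
Qed.

Definition qextend (f : A -> A) (v : V) : V :=
  let p := xchoose (hull_witness v) in p.1%:R^-1 *: iota (f p.2).

Lemma eq_qextend f g : f =1 g -> qextend f =1 qextend g.
Proof. by move=> fg v; rewrite /qextend fg. Qed.

Lemma qextend_mulrn f v n a : is_endo f -> (0 < n)%N -> v *+ n = iota a ->
  qextend f v *+ n = iota (f a).
Proof.
move=> fE n0 va; rewrite /qextend.
case: (xchoose _) (xchooseP (hull_witness v)) => m b /= /andP[m0 /eqP vb].
have ab : a *+ m = b *+ n.
  by apply: iota_inj; rewrite !(zmod_morphMn iotaB) -va -vb -!mulrnA mulnC.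
apply: (mulrn_lmodI m0); rewrite /= -mulrnA mulnC mulrnA.
rewrite -[X in X *+ n]scaler_nat scalerKV ?natr_neq0 //.
by rewrite -!(zmod_morphMn iotaB) -!(zmod_morphMn fE) ab.
Qed.

Lemma qextend_iota f a : is_endo f -> qextend f (iota a) = iota (f a).
Proof. by move=> fE; rewrite -[LHS]mulr1n (qextend_mulrn fE _ (mulr1n _)). Qed.

Lemma qextend_linear f : is_endo f -> linear (qextend f).
Proof.
move=> fE; have fB : zmod_morphism (qextend f).
  move=> u v; have [m [a [m0 ua]]] := iota_hull u.
  have [n [b [n0 vb]]] := iota_hull v.
  have mn0 : (0 < m * n)%N by rewrite muln_gt0 m0.
  have uvab : (u - v) *+ (m * n) = iota (a *+ n - b *+ m).
    rewrite iotaB !(zmod_morphMn iotaB) -ua -vb mulrnBl -!mulrnA.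
    by rewrite [(n * m)%N]mulnC.
  apply: (mulrn_lmodI mn0); rewrite /= (qextend_mulrn fE mn0 uvab).
  rewrite fE iotaB !(zmod_morphMn fE) !(zmod_morphMn iotaB).
  rewrite -(qextend_mulrn fE m0 ua) -(qextend_mulrn fE n0 vb).
  by rewrite mulrnBl -!mulrnA [(n * m)%N]mulnC.
by move=> c u v; rewrite (zmod_morphD fB) (rat_linear fB).
Qed.

Lemma qextend_quasi f : is_endo f -> quasi_endo (qextend f).
Proof.
move=> fE; split; first exact: qextend_linear.
by exists 1%N; split=> // a; exists (f a); rewrite qextend_iota.
Qed.

Lemma qextend_comp f g v : is_endo f -> is_endo g ->
  qextend (f \o g) v = qextend f (qextend g v).
Proof.
move=> fE gE; have fgE := is_endo_comp fE gE.
move: v; apply: linear_eq_hull => [||a]; first exact: qextend_linear.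
  exact: linear_comp (qextend_linear fE) (qextend_linear gE).
by rewrite /= !qextend_iota.
Qed.

Lemma qextend_inj f g :
  is_endo f -> is_endo g -> qextend f =1 qextend g -> f =1 g.
Proof.
move=> fE gE fg a; apply: iota_inj.
by rewrite -(qextend_iota _ fE) -(qextend_iota _ gE) fg.
Qed.

Lemma fun_nonzero_qextend f :
  is_endo f -> fun_nonzero (qextend f) <-> fun_nonzero f.
Proof.
move=> fE; split=> [[v fv] | [a fa]].
  have [n [a [n0 va]]] := iota_hull v; exists a; apply: contraNneq fv => fa0.
  apply/eqP/(mulrn_lmodI n0).
  by rewrite /= (qextend_mulrn fE n0 va) fa0 (zmod_morph0 iotaB) mul0rn.
exists (iota a); rewrite qextend_iota //; apply: contraNneq fa => fa0.
by apply/eqP/iota_inj; rewrite fa0 (zmod_morph0 iotaB).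
Qed.

Definition endo_multiple (alpha : V -> V) (n : nat) :=
  forall a, exists b, alpha (iota a) *+ n = iota b.

Lemma endo_multipleMr alpha n k :
  endo_multiple alpha n -> endo_multiple alpha (n * k).
Proof.
move=> alpha_n a; have [b e] := alpha_n a.
by exists (b *+ k); rewrite mulrnA e (zmod_morphMn iotaB).
Qed.

Lemma restrict_endo_multiple alpha n :
  linear alpha -> (0 < n)%N -> endo_multiple alpha n ->
  exists a, is_endo a /\ qextend a =1 (fun v => n%:R *: alpha v).
Proof.
move=> alphaL n0 alpha_n.
have alpha_n' a : exists b, alpha (iota a) *+ n == iota b.
  by have [b e] := alpha_n a; exists b; rewrite e.
pose r a := xchoose (alpha_n' a).
have rE a : iota (r a) = alpha (iota a) *+ n.
  by rewrite (eqP (xchooseP (alpha_n' a))).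
have r_endo : is_endo r.
  move=> a b; apply: iota_inj.
  by rewrite iotaB !rE iotaB (GRing.zmod_morphism_linear alphaL) mulrnBl.
exists r; split=> //; apply: linear_eq_hull => [||a].
- exact: qextend_linear.
- exact: linear_scale.
- by rewrite qextend_iota // rE scaler_nat.
Qed.

Lemma quasi_endo_scale c alpha :
  quasi_endo alpha -> quasi_endo (fun v => c *: alpha v).
Proof.
move=> [alphaL [n [n0 alpha_n]]]; split; first exact: linear_scale.
case: (ratP c) => p d _.
exists (n * d.+1)%N; split; first by rewrite muln_gt0 n0.
move=> a; have [b e] := alpha_n a; exists (b *~ p).
rewrite mulnC mulrnA scalerMnl -mulr_natr divfK ?natr_neq0 //.
by rewrite scalerMnr e scaler_int (zmod_morphMz iotaB).
Qed.

Lemma quasi_central_scale c X :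
  fun_central quasi_endo X -> fun_central quasi_endo (fun v => c *: X v).
Proof.
move=> [XQ XC]; split; first exact: quasi_endo_scale.
move=> g gQ v /=; have [gL _] := gQ.
by rewrite (GRing.scalable_linear gL); congr (_ *: _); exact: XC.
Qed.

Lemma qextend_central x :
  fun_central (@is_endo A) x -> fun_central quasi_endo (qextend x).
Proof.
move=> [xE xC]; split; first exact: qextend_quasi.
move=> g [gL [n [n0 gn]]] v /=.
have [b [bE bg]] := restrict_endo_multiple gL n0 gn.
apply: (scalerI (natr_neq0 n0)).
rewrite -(GRing.scalable_linear (qextend_linear xE)) -bg -(bg (qextend x v)).
rewrite -(qextend_comp _ xE bE) -(qextend_comp _ bE xE).
by apply: eq_qextend; exact: xC.
Qed.

Lemma endo_central_of_qextend x X : is_endo x -> qextend x =1 X ->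
  fun_central quasi_endo X -> fun_central (@is_endo A) x.
Proof.
move=> xE xX [_ XC]; split=> // g gE.
apply: qextend_inj => [||v]; try exact: is_endo_comp.
rewrite (qextend_comp _ xE gE) (qextend_comp _ gE xE) !xX.
exact: XC (qextend_quasi gE) _.
Qed.

Lemma centrally_essential_quasi_of_endo :
  centrally_essential_fun (@is_endo A) -> centrally_essential_fun quasi_endo.
Proof.
move=> CE alpha [alphaL [n [n0 alpha_n]]] alpha_nz.
have [a [aE a_alpha]] := restrict_endo_multiple alphaL n0 alpha_n.
have a_nz : fun_nonzero a.
  apply/(fun_nonzero_qextend aE)/(eq_fun_nonzero (fsym a_alpha)).
  exact: fun_nonzero_scale (natr_neq0 n0) alpha_nz.
have [x [y [xC yC x_nz y_nz axy]]] := CE a aE a_nz.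
have [[xE _] [yE _]] := (xC, yC).
exists (qextend x), (fun v => n%:R^-1 *: qextend y v); split.
- exact: qextend_central.
- exact/quasi_central_scale/qextend_central.
- exact/(fun_nonzero_qextend xE).
- apply: fun_nonzero_scale; first by rewrite invr_eq0 natr_neq0.
  exact/(fun_nonzero_qextend yE).
- move=> v /=; rewrite -(eq_qextend axy) (qextend_comp _ aE xE) a_alpha.
  by rewrite scalerK ?natr_neq0.
Qed.

Lemma centrally_essential_endo_of_quasi :
  centrally_essential_fun quasi_endo -> centrally_essential_fun (@is_endo A).
Proof.
move=> CE a aE a_nz.
have [X [Y [XC YC X_nz Y_nz aXY]]] :=
  CE _ (qextend_quasi aE) (proj2 (fun_nonzero_qextend aE) a_nz).
have [[XL [mx [mx0 X_m]]] _] := XC; have [[YL [my [my0 Y_m]]] _] := YC.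
have m0 : (0 < mx * my)%N by rewrite muln_gt0 mx0.
have [x [xE xX]] := restrict_endo_multiple XL m0 (endo_multipleMr my X_m).
have Y_m' := endo_multipleMr mx Y_m; rewrite mulnC in Y_m'.
have [y [yE yY]] := restrict_endo_multiple YL m0 Y_m'.
exists x, y; split.
- exact: endo_central_of_qextend xE xX (quasi_central_scale _ XC).
- exact: endo_central_of_qextend yE yY (quasi_central_scale _ YC).
- apply/(fun_nonzero_qextend xE)/(eq_fun_nonzero (fsym xX)).
  exact: fun_nonzero_scale (natr_neq0 m0) X_nz.
- apply/(fun_nonzero_qextend yE)/(eq_fun_nonzero (fsym yY)).
  exact: fun_nonzero_scale (natr_neq0 m0) Y_nz.
- apply: (qextend_inj (is_endo_comp aE xE) yE) => v.
  rewrite (qextend_comp _ aE xE) xX yY.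
  rewrite (GRing.scalable_linear (qextend_linear aE)); congr (_ *: _).
  exact: aXY.
Qed.

End RationalHull.

Theorem proposition3p2 (A : zmodType) (V : lmodType rat) (iota : A -> V) :
  torsion_free A -> is_rational_hull iota ->
  (centrally_essential_fun (@is_endo A) <->
   centrally_essential_fun (is_quasi_endo iota)).
Proof.
(* Torsion-freeness of [A] already follows from its embedding into [V]. *)
move=> _ [iotaB iota_inj iota_hull].
split; [exact: centrally_essential_quasi_of_endo |
        exact: centrally_essential_endo_of_quasi].
Qed.
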